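(* Let $T>0$, $C_1>0$, and let $H:(0,1)^n\times\mathbb S(n)\to\mathbb R^n$, $B:(0,1)^n\times\mathbb S(n)\to\mathbb S(n)$ be $C^1$ with $(B(\mu,p),p)\ge(H(\mu,p),\mu)-C_1$ and $H_i(\mu,p)\ge-C_1$ for all $(\mu,p)\in(0,1)^n\times\mathbb S(n)$ and all $i$; let $g:[0,1]^n\to\mathbb R^n$. Let $\lambda\in[0,1]$, $t\in[0,T)$, $\mu\in\mathcal P_0(\mathbb G)$, and let $(\phi,\rho):[t,T]\to\mathbb R^n\times(0,1)^n$ be a classical solution of $$\dot\phi=H(\rho,\lambda\nabla_{\mathbb G}\phi)-\Delta_{\mathbb G}\phi,\quad\dot\rho=\nabla_{\mathbb G}\cdot B(\rho,\lambda\nabla_{\mathbb G}\phi)+\Delta_{\mathbb G}\rho\ \text{ on }(t,T),\quad\phi(T)=g(\rho(T)),\ \rho(t)=\mu.$$ Then $\lambda(\phi(T),\rho(T))\le\lambda(\phi(t),\mu)+2C_1(T-t)$.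
   Context: $\mathbb G$: finite connected simple undirected graph on $\{1,\dots,n\}$ with symmetric edge weights $\omega_{ij}>0$ iff $(i,j)\in\mathbb E$. $\mathbb S(n)$: skew-symmetric matrices with $(m,\tilde m)=\frac12\sum_{(i,j)\in\mathbb E}m^{ij}\tilde m^{ij}$; $(\cdot,\cdot)$ on $\mathbb R^n$ is Euclidean. $(\nabla_{\mathbb G}u)^{ij}=\sqrt{\omega_{ij}}(u^i-u^j)$, $(\nabla_{\mathbb G}\cdot m)^i=\sum_{j\ne i}\sqrt{\omega_{ij}}m^{ji}$, $(\Delta_{\mathbb G}u)^i=\sum_j\omega_{ij}(u^j-u^i)$. $\mathcal P_0(\mathbb G)$: probability vectors with positive entries. Classical solution: a $C^1$ pair satisfying the system pointwise. *)

From HB Require Import structures.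
From mathcomp Require Import all_boot all_order all_algebra.
From mathcomp Require Import all_classical all_reals all_analysis.
Set Implicit Arguments. Unset Strict Implicit. Unset Printing Implicit Defensive.
Import Order.TTheory GRing.Theory Num.Theory.
Import numFieldNormedType.Exports.
Local Open Scope classical_set_scope.
Local Open Scope ring_scope.

Section Defs.
Variables (R : realType) (n : nat).

(* A weighted finite connected simple undirected graph on 'I_n, encoded by
   its weights: (i,j) is an edge iff 0 < w i j. *)
Definition edge (w : 'I_n -> 'I_n -> R) : rel 'I_n := fun i j => 0 < w i j.

Definition weighted_graph (w : 'I_n -> 'I_n -> R) : Prop :=
  [/\ forall i j, 0 <= w i j,
      forall i j, w i j = w j i,
      forall i, w i i = 0 &
      forall i j, connect (edge w) i j].

Definition skewS (m : 'M[R]_n) : Prop := m^T = - m.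

Definition ipS (w : 'I_n -> 'I_n -> R) (m m' : 'M[R]_n) : R :=
  2^-1 * \sum_(i < n) \sum_(j < n | edge w i j) m i j * m' i j.

Definition ipE (u v : 'rV[R]_n) : R := \sum_(i < n) u ord0 i * v ord0 i.

Definition grad (w : 'I_n -> 'I_n -> R) (u : 'rV[R]_n) : 'M[R]_n :=
  \matrix_(i, j) (Num.sqrt (w i j) * (u ord0 i - u ord0 j)).

Definition div (w : 'I_n -> 'I_n -> R) (m : 'M[R]_n) : 'rV[R]_n :=
  \row_i \sum_(j < n | j != i) Num.sqrt (w i j) * m j i.

Definition lap (w : 'I_n -> 'I_n -> R) (u : 'rV[R]_n) : 'rV[R]_n :=
  \row_i \sum_(j < n) w i j * (u ord0 j - u ord0 i).

Definition open01 (x : 'rV[R]_n) : Prop := forall i, 0 < x ord0 i < 1.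

Definition P0 (x : 'rV[R]_n) : Prop :=
  (forall i, 0 < x ord0 i) /\ \sum_(i < n) x ord0 i = 1.

Definition skewpart (m : 'M[R]_n) : 'M[R]_n := 2^-1 *: (m - m^T).

End Defs.

Definition C1_on (R : realType) (V W : normedModType R) (U : set V)
  (f : V -> W) : Prop :=
  forall v : V, (forall x, U x -> derivable f x v) /\
                (forall x, U x -> {for x, continuous (fun y => 'D_v f y)}).

Definition C1_interval (R : realType) (W : normedModType R) (a b : R)
  (f : R -> W) : Prop :=
  {within `[a, b], continuous f} /\
  (forall s, a < s < b -> derivable f s 1) /\
  exists f' : R -> W, {within `[a, b], continuous f'} /\
    (forall s, a < s < b -> 'D_1 f s = f' s).

(* Pair the two equations. Along the flow, the derivative of
   lam (phi, rho) is lam ((H(rho, p), rho) - (B(rho, p), grad phi)) with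
   p = lam grad phi: the Laplacians cancel because Delta is symmetric, and
   div is minus the adjoint of grad. Since rho stays a probability vector
   (div and Delta have zero mass), (H(rho, p), rho) >= -C1, and the
   structural condition gives lam (B(rho, p), grad phi) = (B(rho, p), p)
   >= (H(rho, p), rho) - C1; hence the derivative is at most
   C1 + (1 - lam) C1 <= 2 C1 and the mean value theorem concludes. *)
From HB Require Import structures.
From mathcomp Require Import all_boot all_order all_algebra.
From mathcomp Require Import all_classical all_reals all_analysis.
From mathcomp Require Import ring lra.
Import Order.TTheory GRing.Theory Num.Theory.
Import numFieldNormedType.Exports.
Local Open Scope classical_set_scope.
Local Open Scope ring_scope.

Section RealLine.
Context {R : realType}.

Lemma derive_le_bound (f df : R -> R) (a b c : R) : a < b ->
  (forall x, x \in `]a, b[ -> is_derive x 1 f (df x)) ->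
  (forall x, x \in `]a, b[ -> df x <= c) ->
  {within `[a, b], continuous f} -> f b <= f a + c * (b - a).
Proof.
move=> ab f_der df_le f_cont; have [x xab fE] := MVT ab f_der f_cont.
have := df_le x xab; have : 0 < b - a by rewrite subr_gt0.
nra.
Qed.

Lemma derive0_cst_cc (f : R -> R) (a b : R) :
  (forall x, x \in `]a, b[ -> is_derive x 1 f 0) ->
  {within `[a, b], continuous f} -> {in `[a, b], forall x, f x = f a}.
Proof.
move=> f_der f_cont x; rewrite in_itv /= => /andP[ax xb].
move: ax; rewrite le_eqVlt => /orP[/eqP <- // | ax].
have f_der' y : y \in `]a, x[ -> is_derive y 1 f 0.
  rewrite !in_itv /= => /andP[ay yx].
  by apply: f_der; rewrite in_itv /= ay (lt_le_trans yx).
have f_cont' : {within `[a, x], continuous f}.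
  by apply: continuous_subspaceW f_cont; apply: subset_itvl; rewrite bnd_simp.
have [y _ /eqP] := MVT ax f_der' f_cont'.
by rewrite mul0r subr_eq0 => /eqP.
Qed.

Context {n : nat}.

Lemma is_derive_ipE (phi rho : R -> 'rV[R]_n) s :
  derivable phi s 1 -> derivable rho s 1 ->
  is_derive s 1 (fun x => ipE (phi x) (rho x))
    (ipE ('D_1 phi s) (rho s) + ipE (phi s) ('D_1 rho s)).
Proof.
move=> phi_der rho_der.
have coord (u : R -> 'rV[R]_n) i : derivable u s 1 ->
    is_derive s 1 (fun x => u x ord0 i) ('D_1 u s ord0 i).
  move=> u_der; rewrite derive_mx // mxE.
  by apply/derivableP; move/derivable_mxP: u_der; apply.
have -> : (fun x => ipE (phi x) (rho x)) =
    \sum_(i < n) (fun x => phi x ord0 i * rho x ord0 i).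
  by apply: funext => x; rewrite /ipE fct_sumE.
apply: is_derive_eq.
  by apply: is_derive_sum => i; apply: is_deriveM; apply: coord.
rewrite /ipE -big_split; apply: eq_bigr => i _; rewrite /GRing.scale /=; ring.
Qed.

Lemma continuous_ipE (A : set R) (phi rho : R -> 'rV[R]_n) :
  {within A, continuous phi} -> {within A, continuous rho} ->
  {within A, continuous (fun x => ipE (phi x) (rho x))}.
Proof.
move=> phi_cont rho_cont.
have -> : (fun x => ipE (phi x) (rho x)) =
    \sum_(i < n) (fun x => phi x ord0 i * rho x ord0 i).
  by apply: funext => x; rewrite /ipE fct_sumE.
move=> x; elim/big_ind: _ => [|f g f_cont g_cont|i _].
- exact: cvg_cst.
- exact: continuousD.
- apply: continuousM.
    exact: continuous_comp (phi_cont x) (@coord_continuous R 1 n ord0 i _).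
  exact: continuous_comp (rho_cont x) (@coord_continuous R 1 n ord0 i _).
Qed.

End RealLine.

Section GraphCalculus.
Context {R : realType} {n : nat} (w : 'I_n -> 'I_n -> R).

Definition mass (u : 'rV[R]_n) : R := \sum_(i < n) u ord0 i.

Lemma ipEC (u v : 'rV[R]_n) : ipE u v = ipE v u.
Proof. by apply: eq_bigr => i _; rewrite mulrC. Qed.

Lemma ipEDl (u v x : 'rV[R]_n) : ipE (u + v) x = ipE u x + ipE v x.
Proof. by rewrite /ipE -big_split; apply: eq_bigr => i _; rewrite !mxE mulrDl. Qed.

Lemma ipEBl (u v x : 'rV[R]_n) : ipE (u - v) x = ipE u x - ipE v x.
Proof. by rewrite /ipE -sumrB; apply: eq_bigr => i _; rewrite !mxE mulrBl. Qed.

Lemma ipEDr (x u v : 'rV[R]_n) : ipE x (u + v) = ipE x u + ipE x v.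
Proof. by rewrite ipEC ipEDl !(ipEC x). Qed.

Lemma ipE0l (u : 'rV[R]_n) : ipE 0 u = 0.
Proof. by rewrite /ipE big1 // => i _; rewrite mxE mul0r. Qed.

Lemma ipE_const1 (u : 'rV[R]_n) : ipE (const_mx 1) u = mass u.
Proof. by apply: eq_bigr => i _; rewrite mxE mul1r. Qed.

Lemma ipE_ge_prob (c : R) (u m : 'rV[R]_n) :
  (forall i, c <= u ord0 i) -> (forall i, 0 <= m ord0 i) -> mass m = 1 ->
  c <= ipE u m.
Proof.
move=> cu m_ge0 m1; rewrite -[c]mulr1 -m1 /mass mulr_sumr.
by apply: ler_sum => i _; rewrite ler_wpM2r.
Qed.

Lemma skewSE (m : 'M[R]_n) i j : skewS m -> m j i = - m i j.
Proof. by move/(congr1 (fun M : 'M[R]_n => M i j)); rewrite !mxE. Qed.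

Lemma skewSZ (a : R) (m : 'M[R]_n) : skewS m -> skewS (a *: m).
Proof.
by move=> m_skew; apply/matrixP => i j; rewrite !mxE skewSE // mulrN.
Qed.

Lemma ipSZr (m q : 'M[R]_n) (a : R) : ipS w m (a *: q) = a * ipS w m q.
Proof.
rewrite /ipS mulrCA; congr (_ * _); rewrite mulr_sumr; apply: eq_bigr => i _.
by rewrite mulr_sumr; apply: eq_bigr => j _; rewrite mxE mulrCA.
Qed.

Lemma ipS0r (m : 'M[R]_n) : ipS w m 0 = 0.
Proof. by rewrite -(scale0r (0 : 'M[R]_n)) ipSZr mul0r. Qed.

Lemma grad_const (c : R) : grad w (const_mx c) = 0.
Proof. by apply/matrixP => i j; rewrite !mxE subrr mulr0. Qed.

Lemma lap_const (c : R) : lap w (const_mx c) = 0.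
Proof.
by apply/matrixP => i j; rewrite !mxE big1 // => k _; rewrite !mxE subrr mulr0.
Qed.

Hypotheses (w_ge0 : forall i j, 0 <= w i j) (wC : forall i j, w i j = w j i)
  (w_diag : forall i, w i i = 0).

Lemma skewS_grad (u : 'rV[R]_n) : skewS (grad w u).
Proof. by apply/matrixP => i j; rewrite !mxE wC -mulrN opprB. Qed.

(* Off the edges w = 0 (as w >= 0), so the gradient vanishes there. *)
Lemma ipS_grad (m : 'M[R]_n) (u : 'rV[R]_n) :
  ipS w m (grad w u) = 2^-1 * \sum_(i < n) \sum_(j < n) m i j * grad w u i j.
Proof.
congr (_ * _); apply: eq_bigr => i _; rewrite big_mkcond; apply: eq_bigr => j _.
rewrite /edge; case: ltP => //; rewrite le_eqVlt ltNge w_ge0 orbF => /eqP w0.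
by rewrite !mxE w0 sqrtr0 !mul0r mulr0.
Qed.

Lemma ipE_div (u : 'rV[R]_n) (m : 'M[R]_n) :
  skewS m -> ipE u (div w m) = - ipS w m (grad w u).
Proof.
move=> m_skew.
pose S := \sum_(i < n) \sum_(j < n) m i j * Num.sqrt (w i j) * u ord0 i.
have divE : ipE u (div w m) = - S.
  rewrite /ipE /S -sumrN; apply: eq_bigr => i _.
  rewrite mxE mulr_sumr -sumrN [RHS](bigD1 i) //= w_diag sqrtr0 mulr0 mul0r.
  rewrite oppr0 add0r; apply: eq_bigr => j _; rewrite skewSE //; ring.
have gradE : \sum_(i < n) \sum_(j < n) m i j * grad w u i j = S + S.
  have swapS : S = - \sum_(i < n) \sum_(j < n) m i j * Num.sqrt (w i j) * u ord0 j.
    rewrite /S exchange_big -sumrN; apply: eq_bigr => j _.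
    by rewrite -sumrN; apply: eq_bigr => i _; rewrite skewSE // wC; ring.
  rewrite {2}swapS -sumrB; apply: eq_bigr => i _.
  by rewrite -sumrB; apply: eq_bigr => j _; rewrite !mxE; ring.
by rewrite divE ipS_grad gradE; congr (- _); lra.
Qed.

Lemma ipE_lap (u v : 'rV[R]_n) : ipE (lap w u) v = ipE u (lap w v).
Proof.
have lapE (x y : 'rV[R]_n) : ipE (lap w x) y =
    \sum_(i < n) \sum_(j < n) w i j * x ord0 j * y ord0 i
  - \sum_(i < n) \sum_(j < n) w i j * x ord0 i * y ord0 i.
  rewrite -sumrB; apply: eq_bigr => i _; rewrite -sumrB mxE mulr_suml.
  by apply: eq_bigr => j _; ring.
rewrite [RHS]ipEC !lapE; congr (_ - _).
  rewrite exchange_big; apply: eq_bigr => i _.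
  by apply: eq_bigr => j _; rewrite wC mulrAC.
by apply: eq_bigr => i _; apply: eq_bigr => j _; rewrite mulrAC.
Qed.

Lemma mass_lap (v : 'rV[R]_n) : mass (lap w v) = 0.
Proof. by rewrite -ipE_const1 ipEC ipE_lap lap_const ipEC ipE0l. Qed.

Lemma mass_div (m : 'M[R]_n) : skewS m -> mass (div w m) = 0.
Proof. by move=> m_skew; rewrite -ipE_const1 ipE_div // grad_const ipS0r oppr0. Qed.

Lemma mass_conserved (rho : R -> 'rV[R]_n) (m : R -> 'M[R]_n) (a b : R) :
  {within `[a, b], continuous rho} ->
  (forall s, s \in `]a, b[ -> derivable rho s 1) ->
  (forall s, s \in `]a, b[ -> skewS (m s)) ->
  (forall s, s \in `]a, b[ -> 'D_1 rho s = div w (m s) + lap w (rho s)) ->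
  {in `[a, b], forall s, mass (rho s) = mass (rho a)}.
Proof.
move=> rho_cont rho_der m_skew rho_eq s sab; rewrite -!ipE_const1.
apply: (@derive0_cst_cc _ (fun s => ipE (const_mx 1) (rho s))) sab.
  move=> x xab.
  have := is_derive_ipE _ rho x (derivable_cst (const_mx 1) x 1) (rho_der x xab).
  by rewrite derive_cst ipE0l add0r rho_eq // ipEDr !ipE_const1 mass_lap addr0
    (mass_div _ (m_skew x xab)).
by apply: (continuous_ipE _ (cst (const_mx 1))) => // x; apply: cvg_cst.
Qed.

Section StructuralBounds.
Variables (H : 'rV[R]_n -> 'M[R]_n -> 'rV[R]_n)
  (B : 'rV[R]_n -> 'M[R]_n -> 'M[R]_n) (C1 : R).
Hypotheses (B_skew : forall m p, open01 m -> skewS p -> skewS (B m p))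
  (HB_le : forall m p, open01 m -> skewS p ->
     ipE (H m p) m - C1 <= ipS w (B m p) p)
  (H_ge : forall m p i, open01 m -> skewS p -> - C1 <= H m p ord0 i).

Lemma pairing_rate_le (lam : R) (ph rh : 'rV[R]_n) :
  0 <= C1 -> 0 <= lam <= 1 -> open01 rh -> mass rh = 1 ->
  lam * (ipE (H rh (lam *: grad w ph) - lap w ph) rh
         + ipE ph (div w (B rh (lam *: grad w ph)) + lap w rh)) <= 2 * C1.
Proof.
move=> C1_ge0 /andP[lam_ge0 lam_le1] rh01 rh1; set p := lam *: grad w ph.
have p_skew : skewS p by apply/skewSZ/skewS_grad.
rewrite ipEBl ipEDr ipE_div; last exact: B_skew.
rewrite ipE_lap.
have HB := HB_le _ _ rh01 p_skew; rewrite /p ipSZr in HB.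
have Hrh : - C1 <= ipE (H rh p) rh.
  apply: ipE_ge_prob rh1 => [i|i]; first exact: H_ge.
  by have /andP[/ltW] := rh01 i.
set E := ipE (H rh p) rh in HB Hrh *; set S := ipS w _ _ in HB *.
have : 0 <= (1 - lam) * (E + C1) by apply: mulr_ge0; lra.
have : 0 <= lam * C1 by apply: mulr_ge0.
nra.
Qed.

End StructuralBounds.
End GraphCalculus.

Theorem lemma3p1 (R : realType) (n : nat) (w : 'I_n -> 'I_n -> R)
  (T C1 : R)
  (H : 'rV[R]_n -> 'M[R]_n -> 'rV[R]_n)
  (B : 'rV[R]_n -> 'M[R]_n -> 'M[R]_n)
  (g : 'rV[R]_n -> 'rV[R]_n)
  (lam t : R) (mu : 'rV[R]_n) (phi rho : R -> 'rV[R]_n) :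
  weighted_graph w ->
  0 < T -> 0 < C1 ->
  C1_on [set x : 'rV[R]_n * 'M[R]_n | open01 x.1]
        (fun x => H x.1 (skewpart x.2)) ->
  C1_on [set x : 'rV[R]_n * 'M[R]_n | open01 x.1]
        (fun x => B x.1 (skewpart x.2)) ->
  (forall m p, open01 m -> skewS p -> skewS (B m p)) ->
  (forall m p, open01 m -> skewS p ->
     ipE (H m p) m - C1 <= ipS w (B m p) p) ->
  (forall m p i, open01 m -> skewS p -> - C1 <= H m p ord0 i) ->
  0 <= lam <= 1 -> 0 <= t < T -> P0 mu ->
  C1_interval t T phi -> C1_interval t T rho ->
  (forall s, t <= s <= T -> open01 (rho s)) ->
  (forall s, t < s < T ->
     'D_1 phi s = H (rho s) (lam *: grad w (phi s)) - lap w (phi s)) ->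
  (forall s, t < s < T ->
     'D_1 rho s = div w (B (rho s) (lam *: grad w (phi s))) + lap w (rho s)) ->
  phi T = g (rho T) -> rho t = mu ->
  lam * ipE (phi T) (rho T) <= lam * ipE (phi t) mu + 2 * C1 * (T - t).
Proof.
move=> [w_ge0 wC w_diag _] _ C1_gt0 _ _ B_skew HB_le H_ge lam01 /andP[_ tT]
  [_ mu1] [phi_cont [phi_der _]] [rho_cont [rho_der _]] rho01 Dphi Drho _ rho_t.
have in_open s : s \in `]t, T[ -> t < s < T by rewrite in_itv.
have rho_mass s : s \in `]t, T[ -> mass (rho s) = 1.
  move=> st; rewrite -mu1 -rho_t.
  apply: (mass_conserved _ w_ge0 wC w_diag _
           (fun s => B (rho s) (lam *: grad w (phi s))) _ _ rho_cont).
  - by move=> x /in_open; exact: rho_der.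
  - move=> x /in_open /andP[tx xT]; apply: B_skew; last exact/skewSZ/skewS_grad.
    by apply: rho01; rewrite !ltW.
  - by move=> x /in_open; exact: Drho.
  - by have /andP[ts sT] := in_open s st; rewrite in_itv /= !ltW.
pose E s := lam * ipE (phi s) (rho s).
pose dE s := lam * (ipE ('D_1 phi s) (rho s) + ipE (phi s) ('D_1 rho s)).
have E_cont : {within `[t, T], continuous E}.
  move=> x; have G_cont := continuous_ipE _ _ _ phi_cont rho_cont x.
  exact: (continuousZl_tmp (k := lam) G_cont).
suff : E T <= E t + 2 * C1 * (T - t) by rewrite /E rho_t.
apply: (derive_le_bound E dE t T (2 * C1) tT _ _ E_cont).
- move=> s /in_open st; apply: is_deriveZ.
  exact: is_derive_ipE (phi_der s st) (rho_der s st).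
- move=> s /[dup] st /in_open ts; rewrite /dE Dphi // Drho //.
  apply: (pairing_rate_le _ w_ge0 wC w_diag _ _ _ B_skew HB_le H_ge) => //.
  - exact: ltW.
  - by case/andP: ts => ts sT; apply: rho01; rewrite !ltW.
  - exact: rho_mass.
Qed.
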